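(* For positive integers $n$, $k$ and $r$, \[S_{\leq m}(n,k,r)=(k-1)!\binom{k+r-1}{k-1}{n\brace k+r-1}_{\leq m}.\]
   Context: $S_{\leq m}(n,k,r)$ (mixed restricted Stirling number of the second kind) is the number of ways to distribute the elements of $[n]$ into non-empty cells, where there are $r$ cells carrying the label $1$ (indistinguishable among themselves) and one cell each with labels $2,\dots,k$, such that every cell contains at most $m$ elements. ${n\brace k}_{\leq m}$ is the number of partitions of $[n]$ into $k$ non-empty blocks each of size at most $m$. *)

From mathcomp Require Import all_boot.
Set Implicit Arguments. Unset Strict Implicit. Unset Printing Implicit Defensive.

Definition stirling2_le (n k m : nat) : nat :=
  #|[set P : {set {set 'I_n}} |
      [&& partition P [set: 'I_n], #|P| == k & [forall B in P, #|B| <= m]]]|.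

(* S_{<= m}(n,k,r): distributions of [n] into r indistinguishable cells with
   label 1 and one cell each with labels 2..k, all cells non-empty of size
   at most m.  Encoding: g : 'I_n -> 'I_k assigns each element a label
   (label 1 is encoded by 0, label j+1 by j); Q is the set partition of the
   elements with label 1 into the r (indistinguishable, non-empty) cells. *)
Definition mixed_stirling_le (n k r m : nat) : nat :=
  #|[set gQ : {ffun 'I_n -> 'I_k} * {set {set 'I_n}} |
      [&& partition gQ.2 [set x | nat_of_ord (gQ.1 x) == 0],
          #|gQ.2| == r,
          [forall B in gQ.2, #|B| <= m] &
          [forall j : 'I_k, (nat_of_ord j != 0) ==>
              (0 < #|gQ.1 @^-1: [set j]| <= m)]]]|.

From mathcomp Require Import all_boot.
Set Implicit Arguments. Unset Strict Implicit. Unset Printing Implicit Defensive.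

(* Forgetting the labels turns a distribution into a partition of [n] into
   k+r-1 blocks of size at most m, the labels 2..k being recorded by an
   injective map from them to the blocks; conversely, in such a marked
   partition the unmarked blocks are the r cells labelled 1.  Hence
   S_{<=m}(n,k,r) is the number of these partitions times the number of
   injections, (k+r-1)^_(k-1) = (k-1)! C(k+r-1, k-1). *)

Lemma partitionP (T : finType) (P : {set {set T}}) (D : {set T}) :
  partition P D <->
  [/\ set0 \notin P, {in P, forall B : {set T}, B \subset D},
      (forall x, x \in D -> exists2 B, B \in P & x \in B) &
      (forall B1 B2 x, B1 \in P -> B2 \in P -> x \in B1 -> x \in B2 -> B1 = B2)].
Proof.
split.
- case/and3P => /eqP coverP /trivIsetP trivP P0; split => //.
  + by move=> B BP; rewrite -coverP; apply: bigcup_sup.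
  + by move=> x; rewrite -coverP => /bigcupP[B BP xB]; exists B.
  + move=> B1 B2 x B1P B2P xB1 xB2; case: (eqVneq B1 B2) => // neqB.
    by rewrite (disjointFr (trivP _ _ B1P B2P neqB) xB1) in xB2.
- case=> P0 subD covD uniqB; apply/and3P; split => //.
  + rewrite eqEsubset; apply/andP; split; first exact/bigcupsP.
    by apply/subsetP => x /covD[B BP xB]; apply/bigcupP; exists B.
  + apply/trivIsetP => B1 B2 B1P B2P neqB; rewrite -setI_eq0.
    apply/eqP/setP => x; rewrite !inE; apply/negP => /andP[xB1 xB2].
    by move/eqP: neqB; apply; apply: uniqB xB1 xB2.
Qed.

(* Here [k] counts the distinguished cells, i.e. it is the k-1 of the paper:
   labels live in ['I_k.+1], label [0] marking the r indistinguishable cells. *)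
Section MarkedPartitions.
Variables (T : finType) (k r m : nat).

Notation labelling := {ffun T -> 'I_k.+1}.
Notation marking := {ffun 'I_k -> {set T}}.

Definition label_fibers (g : labelling) : marking :=
  [ffun i => g @^-1: [set lift ord0 i]].

Definition labelling_of (F : marking) : labelling :=
  [ffun x => if [pick i | x \in F i] is Some i then lift ord0 i else ord0].

Definition distributions : {set labelling * {set {set T}}} :=
  [set gQ : labelling * {set {set T}} |
     [&& partition gQ.2 [set x | nat_of_ord (gQ.1 x) == 0],
         #|gQ.2| == r,
         [forall B in gQ.2, #|B| <= m] &
         [forall j : 'I_k.+1, (nat_of_ord j != 0) ==>
            (0 < #|gQ.1 @^-1: [set j]| <= m)]]].

Definition bounded_partitions : {set {set {set T}}} :=
  [set P : {set {set T}} |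
     [&& partition P [set: T], #|P| == k + r & [forall B in P, #|B| <= m]]].

Definition marked_partitions : {set {set {set T}} * marking} :=
  [set PF : {set {set T}} * marking |
     [&& PF.1 \in bounded_partitions, PF.2 \in ffun_on PF.1 & injectiveb PF.2]].

Definition merge_fibers (gQ : labelling * {set {set T}}) :=
  (gQ.2 :|: [set label_fibers gQ.1 i | i : 'I_k], label_fibers gQ.1).

Definition split_marked (PF : {set {set T}} * marking) :=
  (labelling_of PF.2, PF.1 :\: [set PF.2 i | i : 'I_k]).

Lemma in_label_fibers (g : labelling) i x :
  (x \in label_fibers g i) = (g x == lift ord0 i).
Proof. by rewrite ffunE !inE. Qed.

Lemma label_fibers_inj (g : labelling) :
  (forall i, label_fibers g i != set0) -> injective (label_fibers g).
Proof.
move=> fib_neq0 i j eq_ij; have /set0Pn[x xi] := fib_neq0 i.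
have xj : x \in label_fibers g j by rewrite -eq_ij.
by move: xi xj; rewrite !in_label_fibers => /eqP -> /eqP /lift_inj.
Qed.

Lemma distributionsP (g : labelling) (Q : {set {set T}}) :
  reflect [/\ partition Q [set x | nat_of_ord (g x) == 0], #|Q| = r,
              {in Q, forall B : {set T}, #|B| <= m} &
              forall i, 0 < #|label_fibers g i| <= m]
          ((g, Q) \in distributions).
Proof.
rewrite inE /=; apply: (iffP and4P).
- case=> pQ /eqP cardQ /forall_inP boundQ /forallP fibers; split => // i.
  by have := fibers (lift ord0 i); rewrite lift0 ffunE.
- case=> pQ cardQ boundQ fibers; split => //; first exact/eqP.
  + exact/forall_inP.
  apply/forallP => j; apply/implyP; case: (unliftP ord0 j) => [i -> _|-> //].
  by have := fibers i; rewrite ffunE.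
Qed.

Lemma marked_partitionsP (P : {set {set T}}) (F : marking) :
  reflect [/\ partition P [set: T], #|P| = k + r,
              {in P, forall B : {set T}, #|B| <= m},
              forall i, F i \in P & injective F]
          ((P, F) \in marked_partitions).
Proof.
rewrite !inE /=; apply: (iffP and3P).
- by case=> /and3P[pP /eqP cardP /forall_inP boundP] /ffun_onP FP /injectiveP.
- case=> pP cardP boundP FP /injectiveP injF; split => //; last exact/ffun_onP.
  by apply/and3P; split => //; [apply/eqP | apply/forall_inP].
Qed.

Section Distribution.
Variables (g : labelling) (Q : {set {set T}}).
Hypothesis gQ_dist : (g, Q) \in distributions.

Lemma label_fibers_neq0 i : label_fibers g i != set0.
Proof.
by have [_ _ _ /(_ i)/andP[]] := distributionsP _ _ gQ_dist; rewrite card_gt0.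
Qed.

Lemma label_fibers_notin i : label_fibers g i \notin Q.
Proof.
have [/partitionP[_ subQ _ _] _ _ _] := distributionsP _ _ gQ_dist.
apply/negP => /subQ /subsetP fib_sub; have /set0Pn[x xi] := label_fibers_neq0 i.
by have := fib_sub _ xi; rewrite inE; move: xi; rewrite in_label_fibers => /eqP ->.
Qed.

Lemma merge_fibers_partition :
  partition (Q :|: [set label_fibers g i | i : 'I_k]) [set: T].
Proof.
have [/partitionP[Q0 subQ covQ uniqQ] _ _ _] := distributionsP _ _ gQ_dist.
apply/partitionP; split.
- rewrite inE negb_or Q0 /=; apply/imsetP => -[i _ /esym/eqP].
  by rewrite (negbTE (label_fibers_neq0 i)).
- by move=> *; apply: subsetT.
- move=> x _; case: (unliftP ord0 (g x)) => [i gx|gx0].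
    by exists (label_fibers g i); rewrite ?in_label_fibers ?gx // inE imset_f ?orbT.
  have [B BQ xB] : exists2 B, B \in Q & x \in B by apply: covQ; rewrite inE gx0.
  by exists B; rewrite // inE BQ.
- have zero_fiber B x : B \in Q -> x \in B -> nat_of_ord (g x) == 0.
    by move=> BQ xB; have := subsetP (subQ _ BQ) _ xB; rewrite inE.
  move=> B1 B2 x; rewrite !inE.
  case/orP=> [B1Q|/imsetP[i _ ->]]; case/orP=> [B2Q|/imsetP[j _ ->]].
  + exact: uniqQ.
  + move=> /(zero_fiber _ _ B1Q) gx0; rewrite in_label_fibers => /eqP gx.
    by rewrite gx in gx0.
  + rewrite in_label_fibers => /eqP gx /(zero_fiber _ _ B2Q).
    by rewrite gx.
  + by rewrite !in_label_fibers => /eqP -> /eqP /lift_inj ->.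
Qed.

Lemma merge_fibers_marked : merge_fibers (g, Q) \in marked_partitions.
Proof.
have [_ cardQ boundQ fibers] := distributionsP _ _ gQ_dist.
have injF := label_fibers_inj label_fibers_neq0.
apply/marked_partitionsP; split => //.
- exact: merge_fibers_partition.
- have disjQF : [disjoint Q & [set label_fibers g i | i : 'I_k]].
    apply/pred0P => B /=; apply/negP => /andP[BQ /imsetP[i _ eqB]].
    by have := label_fibers_notin i; rewrite -eqB BQ.
  by rewrite cardsU (disjoint_setI0 disjQF) cards0 subn0 card_imset // card_ord
    cardQ addnC.
- move=> B; rewrite inE => /orP[/boundQ //|/imsetP[i _ ->]].
  by case/andP: (fibers i).
- by move=> i; rewrite inE imset_f ?orbT.
Qed.

Lemma merge_fibersK : split_marked (merge_fibers (g, Q)) = (g, Q).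
Proof.
rewrite /split_marked /merge_fibers /=; congr pair.
- apply/ffunP => x; rewrite ffunE; case: pickP => [i|no_fiber].
    by rewrite in_label_fibers => /eqP.
  case: (unliftP ord0 (g x)) => [i gx|-> //].
  by have := no_fiber i; rewrite in_label_fibers gx eqxx.
- apply/setP => B; rewrite !inE; have [BQ|_] := boolP (B \in Q); last first.
    by rewrite orFb; case: (B \in _).
  rewrite andbT; apply/imsetP => -[i _ eqB].
  by have := label_fibers_notin i; rewrite -eqB BQ.
Qed.

End Distribution.

Lemma labelling_of_eq0 (F : marking) x :
  (nat_of_ord (labelling_of F x) == 0) = [forall i, x \notin F i].
Proof.
rewrite ffunE; case: pickP => [j xj|no_block].
  by rewrite lift0; symmetry; apply/forallP => /(_ j); rewrite xj.
by symmetry; apply/forallP => i; rewrite no_block.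
Qed.

Section MarkedPartition.
Variables (P : {set {set T}}) (F : marking).
Hypothesis PF_marked : (P, F) \in marked_partitions.

Lemma labelling_ofE x i : x \in F i -> labelling_of F x = lift ord0 i.
Proof.
have [/partitionP[_ _ _ uniqP] _ _ FP injF] := marked_partitionsP _ _ PF_marked.
move=> xi; rewrite ffunE; case: pickP => [j xj|no_block]; last first.
  by rewrite no_block in xi.
by rewrite (injF _ _ (uniqP _ _ _ (FP j) (FP i) xj xi)).
Qed.

Lemma label_fibers_of : label_fibers (labelling_of F) = F.
Proof.
apply/ffunP => i; apply/setP => x; rewrite in_label_fibers.
have [xi|xNi] := boolP (x \in F i); first by rewrite (labelling_ofE xi) eqxx.
apply/negbTE; rewrite ffunE; case: pickP => [j xj|_].
  by apply/negP => /eqP /lift_inj eq_ji; rewrite -eq_ji xj in xNi.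
by apply/negP => /eqP/(congr1 val).
Qed.

Lemma split_marked_dist : split_marked (P, F) \in distributions.
Proof.
have [pP cardP boundP FP injF] := marked_partitionsP _ _ PF_marked.
have [P0 _ covP uniqP] := (partitionP _ _).1 pP.
have markedP : [set F i | i : 'I_k] \subset P by apply/subsetP => B /imsetP[i _ ->].
apply/distributionsP; split.
- apply/partitionP; split.
  + by rewrite inE (negbTE P0) andbF.
  + move=> B; rewrite inE => /andP[BNF BP]; apply/subsetP => x xB.
    rewrite inE labelling_of_eq0; apply/forallP => i; apply/negP => xi.
    by move/negP: BNF; apply; rewrite (uniqP _ _ _ BP (FP i) xB xi) imset_f.
  + move=> x; rewrite inE labelling_of_eq0 => /forallP xNF.
    have [B BP xB] := covP x (in_setT x); exists B => //.
    rewrite inE BP andbT; apply/imsetP => -[i _ eqB].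
    by have := xNF i; rewrite -eqB xB.
  + by move=> B1 B2 x; rewrite !inE => /andP[_ B1P] /andP[_ B2P]; apply: uniqP.
- by rewrite cardsD (setIidPr markedP) card_imset // card_ord cardP addKn.
- by move=> B; rewrite inE => /andP[_ /boundP].
- move=> i; rewrite /= label_fibers_of boundP // andbT card_gt0.
  by apply: contraTneq (FP i) => ->.
Qed.

Lemma split_markedK : merge_fibers (split_marked (P, F)) = (P, F).
Proof.
have [_ _ _ FP _] := marked_partitionsP _ _ PF_marked.
rewrite /merge_fibers /split_marked /= label_fibers_of; congr pair.
apply/setP => B; rewrite !inE; have [/imsetP[i _ ->]|] := boolP (B \in _).
  by rewrite orbT FP.
by rewrite orbF.
Qed.

End MarkedPartition.

Lemma card_distributions : #|distributions| = #|marked_partitions|.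
Proof.
have merge_inj : {in distributions &, injective merge_fibers}.
  move=> [g1 Q1] [g2 Q2] dist1 dist2 eq_merge.
  by rewrite -(merge_fibersK dist1) -(merge_fibersK dist2) eq_merge.
rewrite -(card_in_imset merge_inj).
apply: eq_card => PF; apply/imsetP/idP => [[[g Q] gQ_dist ->]|].
  exact: merge_fibers_marked.
case: PF => P F PF_marked.
by exists (split_marked (P, F)); rewrite ?split_marked_dist ?split_markedK.
Qed.

Lemma card_marked_partitions :
  #|marked_partitions| = #|bounded_partitions| * (k + r) ^_ k.
Proof.
rewrite -sum_nat_const /marked_partitions -sum1dep_card.
rewrite -(pair_big_dep (fun P => P \in bounded_partitions)
           (fun P (F : marking) => (F \in ffun_on P) && injectiveb F) (fun _ _ => 1)).
apply: eq_bigr => P; rewrite inE => /and3P[_ /eqP cardP _].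
by rewrite sum1dep_card -cardP -[k in _ ^_ k]card_ord -card_inj_ffuns_on.
Qed.

End MarkedPartitions.

Theorem mainTheorem12 (n k r m : nat) :
  0 < n -> 0 < k -> 0 < r ->
  mixed_stirling_le n k r m =
    (k - 1)`! * 'C(k + r - 1, k - 1) * stirling2_le n (k + r - 1) m.
Proof.
(* The identity holds for every n and r; only 0 < k is used. *)
case: k => [//|k] _ _ _; rewrite addSn !subn1 /=.
have -> : mixed_stirling_le n k.+1 r m = #|distributions 'I_n k r m| by [].
have -> : stirling2_le n (k + r) m = #|bounded_partitions 'I_n k r m| by [].
by rewrite card_distributions card_marked_partitions -bin_ffact mulnC (mulnC k`!).
Qed.
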